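(* Suppose $p\neq2$ and let $\nu\in\widehat{\mathbb{F}_q^\times}$ with $\nu\neq\varepsilon$. Then $$\frac{1}{1-q}\sum_{\eta\in\widehat{\mathbb{F}_q^\times}}F_2\!\left({\varepsilon;\overline{\eta},\overline{\nu}\eta\atop\varepsilon,\varepsilon};\frac12,\frac12\right)=-1.$$
   Context: $\mathbb{F}_q$ is a finite field with $q$ elements and characteristic $p$. $\widehat{\mathbb{F}_q^\times}$ is the group of multiplicative characters $\mathbb{F}_q^\times\to\overline{\mathbb{Q}}^\times$, $\varepsilon$ the trivial character; every character $\eta$ (including $\varepsilon$) is extended by $\eta(0)=0$; $\overline{\eta}=\eta^{-1}$; $\delta(\eta)=1$ if $\eta=\varepsilon$, else $0$. $\psi$ is a fixed non-trivial additive character. $g(\eta)=-\sum_{x\in\mathbb{F}_q^\times}\psi(x)\eta(x)$, $g^\circ(\eta)=q^{\delta(\eta)}g(\eta)$, $(\alpha)_\mu=g(\alpha\mu)/g(\alpha)$, $(\alpha)^\circ_\mu=g^\circ(\alpha\mu)/g^\circ(\alpha)$. Appell's function: for $x,y\in\mathbb{F}_q$, $F_2\!\left({\alpha;\beta_1,\beta_2\atop\gamma_1,\gamma_2};x,y\right)=\frac{1}{(1-q)^2}\sum_{\nu_1,\nu_2\in\widehat{\mathbb{F}_q^\times}}\frac{(\alpha)_{\nu_1\nu_2}(\beta_1)_{\nu_1}(\beta_2)_{\nu_2}}{(\gamma_1)^\circ_{\nu_1}(\gamma_2)^\circ_{\nu_2}(\varepsilon)^\circ_{\nu_1}(\varepsilon)^\circ_{\nu_2}}\nu_1(x)\nu_2(y)$.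 *)

From HB Require Import structures.
From mathcomp Require Import all_boot all_order all_algebra all_fingroup all_solvable all_field all_character.
Set Implicit Arguments. Unset Strict Implicit. Unset Printing Implicit Defensive.
Import GRing.Theory Num.Theory.
Local Open Scope ring_scope.

(* Multiplicative characters of F_q^x are the irreducible (= linear, the group
   being abelian) characters of the finite group {unit F}, valued in algC
   (algebraic closure of Q).  A class function phi on {unit F} is extended to F
   by phi(0) = 0. *)
Section FF.
Variable F : finFieldType.

Definition UG := [set: {unit F}]%G.

Definition chx (phi : 'CF(UG)) (x : F) : algC :=
  if [pick u : {unit F} | val u == x] is Some u then phi u else 0.

Definition qF : algC := (#|F|)%:R.

Definition delta (phi : 'CF(UG)) : nat := (phi == 1).

Variable psi : F -> algC.

Definition gauss (phi : 'CF(UG)) : algC :=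
  - \sum_(x : F | x != 0) psi x * chx phi x.

Definition gaussc (phi : 'CF(UG)) : algC := qF ^+ delta phi * gauss phi.

Definition poch (a m : 'CF(UG)) : algC := gauss (a * m) / gauss a.
Definition pochc (a m : 'CF(UG)) : algC := gaussc (a * m) / gaussc a.

Definition appellF2 (a b1 b2 c1 c2 : 'CF(UG)) (x y : F) : algC :=
  (1 - qF)^-2 * \sum_(i : Iirr UG) \sum_(j : Iirr UG)
    (poch a ('chi_i * 'chi_j) * poch b1 'chi_i * poch b2 'chi_j
     / (pochc c1 'chi_i * pochc c2 'chi_j * pochc 1 'chi_i * pochc 1 'chi_j)
     * chx 'chi_i x * chx 'chi_j y).

End FF.

Definition additive_char (F : finFieldType) (psi : F -> algC) : Prop :=
  (forall x y, psi (x + y) = psi x * psi y) /\ psi 0 = 1 /\ exists x, psi x != 1.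

From HB Require Import structures.
From mathcomp Require Import all_boot all_order all_algebra all_fingroup all_solvable all_field all_character.
From mathcomp Require Import ring.
Import GRing.Theory Num.Theory.
Local Open Scope ring_scope.

(* For alpha = gamma_1 = gamma_2 = eps, each quotient (beta)_chi / (eps)°_chi in Appell's
   F_2 equals the character sum  sum_z (1 - chi(z)) beta(z/(z-1)),  and
   1/(eps)°_chi = chi(-1) g(chi^-1).
   Summing over eta, orthogonality fuses the two sums attached to eta^-1 and nu^-1 eta into
   one sum over z weighted by nu^-1(z/(z-1)).  What is left is the kernel
     D(s,t) = sum_(chi,lambda) g(chi lambda) g(chi^-1) g(lambda^-1) chi(s) lambda(t)
            = (q-1)^2 [s t <> 0] (1 - q [1 + s + t = 0]),
   computed by expanding g(chi lambda) and inverting sum_chi g(chi^-1) chi(y) = -(q-1) psi(y)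
   (y <> 0).  At x = y = 1/2 the four values of D entering the z-th term are the same for all
   z outside {0, 1}, so sum_eta F_2 = (1-q)^-2 (q-1)^3 because nu^-1 sums to 0. *)

Lemma mul_lin_char (gT : finGroupType) (G : {group gT}) (phi xi : 'CF(G)) :
  phi \is a linear_char -> xi \is a linear_char -> phi * xi \is a linear_char.
Proof.
move=> phi_lin xi_lin.
by rewrite qualifE /= rpredM ?lin_charW //= cfunE !lin_char1 // mulr1.
Qed.

Lemma mulr_fixed_eq0 {R : idomainType} {c s : R} : c != 1 -> c * s = s -> s = 0.
Proof.
move=> c1 /eqP; rewrite -subr_eq0 -[X in _ - X]mul1r -mulrBl mulf_eq0 subr_eq0.
by rewrite (negbTE c1) => /eqP.
Qed.

Section MulChar.
Context {F : finFieldType} {C : numClosedFieldType}.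

Local Notation q := (#|F|%:R : C).

Lemma card_neq0 : q != 0.
Proof. by rewrite pnatr_eq0 -lt0n; apply/card_gt0P; exists 0. Qed.

Lemma card_sub1_neq0 : q - 1 != 0.
Proof.
rewrite subr_eq0 pnatr_eq1 neq_ltn orbC -[(1 < _)%N]/(1 < #|F|)%N.
by apply/orP; left; apply/card_gt1P; exists 0, 1; rewrite eq_sym oner_neq0.
Qed.

Definition mulchar (f : F -> C) : Prop :=
  [/\ {morph f : x y / x * y}, f 1 = 1, f 0 = 0 & forall x, f x^-1 = (f x)^*].

Definition mchar1 (x : F) : C := (x != 0)%:R.

Lemma mulchar1 : mulchar mchar1.
Proof.
rewrite /mchar1; split.
- by move=> x y /=; rewrite mulf_eq0 negb_or -mulnb natrM.
- by rewrite oner_neq0.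
- by rewrite eqxx.
- by move=> x; rewrite invr_eq0 conjC_nat.
Qed.

Lemma mchar1E x : mchar1 x = 1 - (x == 0)%:R.
Proof. by rewrite /mchar1; case: (x == 0); rewrite ?subr0 ?subrr. Qed.

Lemma sum_delta (f : F -> C) y : \sum_x f x * (x == y)%:R = f y.
Proof.
rewrite (bigD1 y) //= eqxx mulr1 big1 ?addr0 // => x /negbTE ->; exact: mulr0.
Qed.

Lemma sum_mchar1 : \sum_x mchar1 x = q - 1.
Proof.
under eq_bigr do rewrite mchar1E -[(_ == 0)%:R]mul1r.
by rewrite sumrB sum_delta sumr_const.
Qed.

Lemma mulchar_trivial_or_sum0 f :
  mulchar f -> f =1 mchar1 \/ \sum_x f x = 0.
Proof.
case=> fM f1 f0 _.
have [/existsP[u /andP[u0 fu1]] | /existsPn triv] :=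
  boolP [exists u, (u != 0) && (f u != 1)]; last first.
  left=> x; rewrite /mchar1; have [->|x0] := eqVneq x 0; first by rewrite f0.
  by have := triv x; rewrite x0 negbK => /eqP.
right; apply: (mulr_fixed_eq0 fu1).
rewrite mulr_sumr [RHS](reindex_inj (mulfI u0)) /=.
by apply: eq_bigr => x _; rewrite fM.
Qed.

(* The involution x |-> x / (x - 1) of F; thanks to 0^-1 = 0 it also swaps 0 and 1. *)
Definition mob (x : F) : F := (1 - x^-1)^-1.

Lemma mobK : involutive mob.
Proof. by move=> x; rewrite /mob invrK subKr invrK. Qed.

Lemma mob_eq0 x : (mob x == 0) = (x == 1).
Proof. by rewrite /mob invr_eq0 subr_eq0 eq_sym invr_eq1. Qed.

Lemma mob1 : mob 1 = 0.
Proof. by apply/eqP; rewrite mob_eq0. Qed.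

Lemma mob0 : mob 0 = 1.
Proof. by rewrite /mob invr0 subr0 invr1. Qed.

Lemma sum_mob (f : F -> C) : \sum_x f (mob x) = \sum_x f x.
Proof. by rewrite [RHS](reindex_inj (inv_inj mobK)). Qed.

End MulChar.

Section GaussSum.
Context {F : finFieldType} {C : numClosedFieldType}.
Variable psi : F -> C.
Hypotheses (psiD : {morph psi : x y / x + y >-> x * y}) (psi0 : psi 0 = 1)
  (psi_nontriv : exists x, psi x != 1).

Local Notation q := (#|F|%:R : C).

Definition gsum (f : F -> C) : C := - \sum_x psi x * f x.

Lemma eq_gsum f g : f =1 g -> gsum f = gsum g.
Proof. by move=> fg; rewrite /gsum; under eq_bigr do rewrite fg. Qed.

Lemma sum_psi : \sum_x psi x = 0.
Proof.
case: psi_nontriv => u psiu1; apply: (mulr_fixed_eq0 psiu1).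
rewrite mulr_sumr [RHS](reindex_inj (addrI u)) /=.
by apply: eq_bigr => x _; rewrite psiD.
Qed.

Lemma sum_psiM c : \sum_x psi (c * x) = q * (c == 0)%:R.
Proof.
have [->|c0] := eqVneq c 0.
  under eq_bigr do rewrite mul0r psi0.
  by rewrite sumr_const mulr1 cardE.
by rewrite mulr0 -[RHS]sum_psi [RHS](reindex_inj (mulfI c0)).
Qed.

Lemma sum_mchar1_psiM c : \sum_x mchar1 x * psi (c * x) = q * (c == 0)%:R - 1.
Proof.
under eq_bigr do rewrite mchar1E mulrBl mul1r [_%:R * _]mulrC.
by rewrite sumrB sum_psiM sum_delta mulr0 psi0.
Qed.

Lemma gsum_mchar1 : gsum mchar1 = 1.
Proof.
rewrite /gsum; under eq_bigr do rewrite mchar1E mulrBr mulr1.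
by rewrite sumrB sum_psi sum_delta psi0 sub0r opprK.
Qed.

Lemma sum_psiM_mulchar b c : mulchar b ->
  \sum_a psi (a * c) * b a = (c == 0)%:R * \sum_a b a - b c^-1 * gsum b.
Proof.
case=> bM _ b0 _; have [->|c0] := eqVneq c 0.
  rewrite invr0 b0 mul0r subr0 mul1r.
  by apply: eq_bigr => a _; rewrite mulr0 psi0 mul1r.
rewrite mul0r sub0r /gsum mulrN opprK mulr_sumr.
rewrite (reindex_inj (mulfI (invr_neq0 c0))) /=.
by apply: eq_bigr => a _; rewrite bM (mulrC c^-1) mulfVK //; ring.
Qed.

Lemma gsumM_conj b v : mulchar b -> mulchar v ->
  gsum (fun x => b x * v x) * gsum (fun x => (v x)^*) * v (-1) =
  \sum_a b a - gsum b * \sum_x v x * b (mob x).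
Proof.
move=> Mb [vM v1 v0 vV]; have b0 : b 0 = 0 by case: Mb.
have inner a : \sum_c psi a * psi c * b a * v (- (a * c^-1)) =
               \sum_x psi (a * (1 - x^-1)) * b a * v x.
  have [->|a0] := eqVneq a 0.
    by rewrite b0 !big1 // => x _; rewrite mulr0 mul0r.
  have inj : injective (fun x => - (a * x^-1)).
    by move=> x y /oppr_inj /(mulfI a0) /invr_inj.
  rewrite (reindex_inj inj) /=; apply: eq_bigr => x _.
  rewrite invrN invfM invrK mulrN opprK mulrA mulfV // mul1r.
  by rewrite mulrBr mulr1 psiD.
transitivity (\sum_a \sum_c psi a * psi c * b a * v (- (a * c^-1))).
  rewrite /gsum mulrNN mulr_suml mulr_suml; apply: eq_bigr => a _.
  rewrite mulr_sumr mulr_suml; apply: eq_bigr => c _.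
  by rewrite -[- (a / c)]mulrN1 !vM vV; ring.
under eq_bigr do rewrite inner.
rewrite exchange_big /=.
transitivity (\sum_x (v x * (\sum_a b a) * (x == 1)%:R - gsum b * (v x * b (mob x)))).
  apply: eq_bigr => x _; rewrite -[LHS]mulr_suml sum_psiM_mulchar //.
  by rewrite subr_eq0 eq_sym invr_eq1 -/(mob x); ring.
by rewrite sumrB sum_delta v1 mul1r mulr_sumr.
Qed.

Lemma gsum_conj f : mulchar f -> gsum f * gsum (fun x => (f x)^*) * f (-1) = q - \sum_x f x.
Proof.
move=> Mf; have [_ f1 f0 _] := Mf.
have := @gsumM_conj _ f mulchar1 Mf; rewrite gsum_mchar1 mul1r sum_mchar1.
rewrite (eq_gsum _ f) => [->|x]; last first.
  by rewrite /mchar1; have [->|] := eqVneq x 0; rewrite ?f0 ?mulr0 ?mul1r.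
under eq_bigr do rewrite mchar1E mob_eq0 mulrBr mulr1.
by rewrite sumrB sum_delta f1; ring.
Qed.

Lemma gsum_neq0 f : mulchar f -> gsum f != 0.
Proof.
move=> Mf; have [f1|sum0] := mulchar_trivial_or_sum0 _ Mf.
  by rewrite (eq_gsum _ _ f1) gsum_mchar1 oner_neq0.
apply: contra_neq (@card_neq0 F C) => gf0.
by have := gsum_conj _ Mf; rewrite gf0 sum0 subr0 !mul0r => <-.
Qed.

Lemma gsum_ratio b v : mulchar b -> mulchar v ->
  gsum (fun x => b x * v x) / gsum b * (v (-1) * gsum (fun x => (v x)^*)) =
  \sum_x (1 - v x) * b (mob x).
Proof.
move=> Mb Mv; have gb0 := gsum_neq0 _ Mb.
have sum_b : (\sum_a b a) / gsum b = \sum_x b (mob x).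
  rewrite sum_mob; have [b1|->] := mulchar_trivial_or_sum0 _ Mb; last by rewrite mul0r.
  by rewrite (eq_gsum _ _ b1) gsum_mchar1 divr1.
have -> : gsum (fun x => b x * v x) / gsum b * (v (-1) * gsum (fun x => (v x)^*)) =
    gsum (fun x => b x * v x) * gsum (fun x => (v x)^*) * v (-1) / gsum b by ring.
rewrite gsumM_conj // mulrBl mulrAC divff // mul1r sum_b -sumrB.
by apply: eq_bigr => x _; ring.
Qed.

End GaussSum.

Section UnitCharacters.
Context {F : finFieldType}.

Local Notation q := (qF F).

Lemma abelian_UG : abelian (UG F).
Proof.
by apply/centsP => u _ w _; apply: val_inj; rewrite !FinRing.val_unitM mulrC.
Qed.

Lemma irr_UG_lin (i : Iirr (UG F)) : 'chi_i \is a linear_char.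
Proof. exact/(char_abelianP _ abelian_UG). Qed.

Lemma chxE (phi : 'CF(UG F)) (u : {unit F}) : chx phi (val u) = phi u.
Proof. by rewrite /chx; case: pickP => [w /eqP/val_inj -> // | /(_ u)]; rewrite eqxx. Qed.

Lemma chx0 (phi : 'CF(UG F)) : chx phi 0 = 0.
Proof. by rewrite /chx; case: pickP => // w /eqP w0; have := valP w; rewrite /= w0 unitr0. Qed.

Lemma nonzero_unit_val (x : F) : x != 0 -> exists u : {unit F}, x = val u.
Proof. by rewrite -unitfE => ux; exists (FinRing.unit F ux). Qed.

Lemma chxM (phi xi : 'CF(UG F)) x : chx (phi * xi) x = chx phi x * chx xi x.
Proof.
have [->|/nonzero_unit_val[u ->]] := eqVneq x 0; first by rewrite !chx0 mul0r.
by rewrite !chxE cfunE.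
Qed.

Lemma chxC (phi : 'CF(UG F)) x : chx (phi^*)%CF x = (chx phi x)^*.
Proof.
have [->|/nonzero_unit_val[u ->]] := eqVneq x 0; first by rewrite !chx0 conjC0.
by rewrite !chxE cfunE.
Qed.

Lemma chx1 : chx (1 : 'CF(UG F)) =1 mchar1.
Proof.
move=> x; rewrite /mchar1; have [->|/nonzero_unit_val[u ->]] := eqVneq x 0; first by rewrite chx0.
by rewrite chxE cfun1E inE.
Qed.

Lemma mulchar_chx (phi : 'CF(UG F)) : phi \is a linear_char -> mulchar (chx phi).
Proof.
move=> lin; split.
- move=> x y /=; have [->|/nonzero_unit_val[u ->]] := eqVneq x 0; first by rewrite mul0r chx0 mul0r.
  have [->|/nonzero_unit_val[w ->]] := eqVneq y 0; first by rewrite mulr0 chx0 mulr0.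
  by rewrite -FinRing.val_unitM !chxE (lin_charM lin) ?inE.
- by rewrite -FinRing.val_unit1 chxE lin_char1.
- exact: chx0.
- move=> x; have [->|/nonzero_unit_val[u ->]] := eqVneq x 0; first by rewrite invr0 chx0 conjC0.
  by rewrite -FinRing.val_unitV !chxE lin_charV_conj ?inE.
Qed.

Lemma mulchar_irr (i : Iirr (UG F)) : mulchar (chx 'chi_i).
Proof. exact/mulchar_chx/irr_UG_lin. Qed.

Lemma sum_chx_lin_nontriv (phi : 'CF(UG F)) :
  phi \is a linear_char -> phi != 1 -> \sum_x chx phi x = 0.
Proof.
move=> lin; have [phi1 /eqP[]|//] := mulchar_trivial_or_sum0 _ (mulchar_chx _ lin).
by apply/cfunP => u; rewrite -chxE phi1 -chx1 chxE.
Qed.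

Lemma sum_chx_irr z : \sum_(i : Iirr (UG F)) chx 'chi_i z = (q - 1) * (z == 1)%:R.
Proof.
have [->|/nonzero_unit_val[u ->]] := eqVneq z 0.
  by rewrite big1 => [|i _]; rewrite ?chx0 // eq_sym oner_eq0 mulr0.
transitivity (\sum_(i : Iirr (UG F)) 'chi_i u * ('chi_i 1%g)^*).
  by apply: eq_bigr => i _; rewrite chxE lin_char1 ?irr_UG_lin // conjC1 mulr1.
rewrite second_orthogonality_relation ?group1 // class1G inE.
have [->|u1] := eqVneq u 1%g; last first.
  suff /negbTE -> : val u != 1 by rewrite mulr0.
  by apply: contra u1 => /eqP u1; apply/eqP/val_inj.
rewrite eqxx cent11T setIT card_finField_unit /qF mulr1.
have F_gt0 : (0 < #|F|)%N by apply/card_gt0P; exists 0.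
by rewrite -(prednK F_gt0) -natr1 addrK mulr1n.
Qed.

Lemma sum_chx_conj_irr u v :
  \sum_(i : Iirr (UG F)) (chx 'chi_i u)^* * chx 'chi_i v =
  (q - 1) * ((u != 0) && (u == v))%:R.
Proof.
have chxVM i : (chx 'chi_i u)^* * chx 'chi_i v = chx 'chi_i (u^-1 * v).
  by have [iM _ _ iV] := mulchar_irr i; rewrite iM iV.
under eq_bigr do rewrite chxVM.
rewrite sum_chx_irr; congr (_ * _%:R).
have [->|u0] := eqVneq u 0; first by rewrite invr0 mul0r eq_sym oner_eq0.
by rewrite -(inj_eq (mulfI u0)) mulVKf // mulr1 eq_sym.
Qed.

Lemma sum_irr_bilinear (f g : F -> algC) (u : F -> F) : injective u ->
  \sum_(i : Iirr (UG F)) (\sum_x f x * (chx 'chi_i (u x))^*) * (\sum_x g x * chx 'chi_i (u x))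
  = (q - 1) * \sum_x f x * g x * (u x != 0)%:R.
Proof.
move=> u_inj; under eq_bigr do rewrite big_distrlr /=.
rewrite exchange_big mulr_sumr; apply: eq_bigr => x _.
rewrite exchange_big (bigD1 x) //= [X in _ + X]big1 => [|y yx]; last first.
  under eq_bigr do rewrite mulrACA.
  by rewrite -mulr_sumr sum_chx_conj_irr (inj_eq u_inj) [x == y]eq_sym (negbTE yx) andbF !mulr0.
under eq_bigr do rewrite mulrACA.
by rewrite -mulr_sumr sum_chx_conj_irr eqxx andbT addr0; ring.
Qed.

Lemma sum_irr_conj_twist (nu : Iirr (UG F)) (f g : F -> algC) :
  \sum_(eta : Iirr (UG F))
     (\sum_z f z * chx ('chi_eta)^*%CF (mob z)) *
     (\sum_z g z * chx (('chi_nu)^*%CF * 'chi_eta) (mob z))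
  = (q - 1) * \sum_z f z * g z * (chx 'chi_nu (mob z))^*.
Proof.
transitivity (\sum_(eta : Iirr (UG F))
   (\sum_z f z * (chx 'chi_eta (mob z))^*) *
   (\sum_z (g z * (chx 'chi_nu (mob z))^*) * chx 'chi_eta (mob z))).
  apply: eq_bigr => eta _; congr (_ * _); apply: eq_bigr => z _.
    by rewrite chxC.
  by rewrite chxM chxC mulrA.
rewrite sum_irr_bilinear; last exact: inv_inj mobK.
congr (_ * _); apply: eq_bigr => z _; rewrite mulrA.
by have [->|] := eqVneq (mob z) 0; rewrite ?chx0 ?conjC0 ?mulr0 ?mulr1.
Qed.

End UnitCharacters.

Section GaussCharacters.
Context {F : finFieldType}.
Variable psi : F -> algC.
Hypotheses (psiD : {morph psi : x y / x + y >-> x * y}) (psi0 : psi 0 = 1)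
  (psi_nontriv : exists x, psi x != 1).

Local Notation q := (qF F).
Local Notation G := (gsum psi).

Lemma gaussE phi : gauss psi phi = G (chx phi).
Proof.
rewrite /gauss /gsum big_mkcond /=; congr (- _); apply: eq_bigr => x _.
by have [->|] := eqVneq x 0; rewrite ?chx0 ?mulr0.
Qed.

Lemma pochc1_inv phi : phi \is a linear_char ->
  (pochc psi 1 phi)^-1 = chx phi (-1) * G (fun x => (chx phi x)^*).
Proof.
move=> lin; have Mphi := mulchar_chx _ lin.
have G1 : G (chx 1) = 1 by rewrite (eq_gsum _ _ _ chx1) gsum_mchar1.
rewrite /pochc /gaussc /delta mul1r eqxx expr1 !gaussE G1 mulr1.
have [->|phi1] := eqVneq phi 1.
  rewrite expr1 G1 mulr1 divff ?card_neq0 // invr1 (chx1 (-1)) /mchar1 oppr_eq0 oner_neq0 mul1r.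
  suff -> : G (fun x => (chx 1 x)^*) = G mchar1 by rewrite gsum_mchar1.
  by apply: eq_gsum => x; rewrite chx1 /mchar1 conjC_nat.
rewrite expr0 mul1r invf_div /qF.
have := gsum_conj _ psiD psi0 psi_nontriv _ Mphi.
rewrite sum_chx_lin_nontriv // subr0 => <-.
by move: (gsum_neq0 _ psiD psi0 psi_nontriv _ Mphi) => G0; field.
Qed.

Lemma poch_div_pochc1 b v : b \is a linear_char -> v \is a linear_char ->
  poch psi b v / pochc psi 1 v = \sum_x (1 - chx v x) * chx b (mob x).
Proof.
move=> b_lin v_lin; rewrite pochc1_inv // /poch !gaussE (eq_gsum _ _ _ (chxM b v)).
exact: gsum_ratio psiD psi0 psi_nontriv _ _ (mulchar_chx _ b_lin) (mulchar_chx _ v_lin).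
Qed.

Lemma sum_gsum_conj_irr y :
  \sum_(i : Iirr (UG F)) G (fun x => (chx 'chi_i x)^*) * chx 'chi_i y =
  - (q - 1) * (mchar1 y * psi y).
Proof.
transitivity (- \sum_x psi x * \sum_(i : Iirr (UG F)) (chx 'chi_i x)^* * chx 'chi_i y).
  rewrite /gsum; under eq_bigr do rewrite mulNr mulr_suml.
  rewrite sumrN exchange_big; congr (- _); apply: eq_bigr => x _.
  by rewrite mulr_sumr; apply: eq_bigr => i _; rewrite mulrA.
under eq_bigr do rewrite sum_chx_conj_irr.
rewrite /mchar1; have [->|y0] := eqVneq y 0.
  by rewrite big1 ?oppr0 ?mul0r ?mulr0 // => x _; rewrite andNb mulr0 mulr0.
rewrite (bigD1 y) //= y0 eqxx big1 ?addr0 => [|x /negbTE ->]; last by rewrite andbF !mulr0.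
by rewrite mulr1; ring.
Qed.

Definition gauss3 (s t : F) : algC :=
  \sum_(i : Iirr (UG F)) \sum_(j : Iirr (UG F))
    G (fun x => chx 'chi_i x * chx 'chi_j x) *
    G (fun x => (chx 'chi_i x)^*) * G (fun x => (chx 'chi_j x)^*) * chx 'chi_i s * chx 'chi_j t.

Lemma gauss3_psi s t :
  gauss3 s t = - (q - 1) ^+ 2 *
    \sum_a psi a * (mchar1 (s * a) * psi (s * a)) * (mchar1 (t * a) * psi (t * a)).
Proof.
transitivity (\sum_(i : Iirr (UG F)) \sum_(j : Iirr (UG F)) \sum_a
    - (psi a * (G (fun x => (chx 'chi_i x)^*) * chx 'chi_i (s * a)) *
                (G (fun x => (chx 'chi_j x)^*) * chx 'chi_j (t * a)))).
  apply: eq_bigr => i _; apply: eq_bigr => j _.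
  have [iM _ _ _] := mulchar_irr i; have [jM _ _ _] := mulchar_irr j.
  rewrite {1}/gsum !mulNr !mulr_suml -sumrN.
  by apply: eq_bigr => a _; rewrite iM jM; ring.
transitivity (- \sum_a psi a *
    (\sum_(i : Iirr (UG F)) G (fun x => (chx 'chi_i x)^*) * chx 'chi_i (s * a)) *
    (\sum_(j : Iirr (UG F)) G (fun x => (chx 'chi_j x)^*) * chx 'chi_j (t * a))).
  under eq_bigr do rewrite exchange_big.
  rewrite exchange_big -sumrN; apply: eq_bigr => a _.
  rewrite -mulrA big_distrlr mulr_sumr -sumrN /=; apply: eq_bigr => i _.
  by rewrite mulr_sumr -sumrN; apply: eq_bigr => j _; rewrite mulrA.
under eq_bigr do rewrite !sum_gsum_conj_irr.
by rewrite mulr_sumr -sumrN; apply: eq_bigr => a _; ring.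
Qed.

Lemma gauss3E s t :
  gauss3 s t = (q - 1) ^+ 2 * ((s != 0) && (t != 0))%:R * (1 - q * (1 + s + t == 0)%:R).
Proof.
rewrite gauss3_psi; have [->|s0] /= := eqVneq s 0.
  by rewrite big1 ?(mulr0, mul0r) // => a _; rewrite mul0r /mchar1 eqxx !(mulr0, mul0r).
have [->|t0] /= := eqVneq t 0.
  by rewrite big1 ?(mulr0, mul0r) // => a _; rewrite mul0r /mchar1 eqxx !(mulr0, mul0r).
have [mM _ _ _] := @mulchar1 F algC.
transitivity (- (q - 1) ^+ 2 * \sum_a mchar1 a * psi ((1 + s + t) * a)).
  congr (_ * _); apply: eq_bigr => a _.
  have s1 : mchar1 s = 1 by rewrite /mchar1 s0.
  have t1 : mchar1 t = 1 by rewrite /mchar1 t0.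
  rewrite !mM s1 t1 !mulrDl mul1r !psiD /mchar1.
  by case: (a != 0); rewrite /= ?mul0r ?mul1r ?mulr0 // mulrA.
by rewrite sum_mchar1_psiM //; ring.
Qed.

Lemma gauss3_expand s t z :
  \sum_(i : Iirr (UG F)) \sum_(j : Iirr (UG F))
    G (fun x => chx 'chi_i x * chx 'chi_j x) *
    G (fun x => (chx 'chi_i x)^*) * G (fun x => (chx 'chi_j x)^*) * chx 'chi_i s * chx 'chi_j t *
    ((1 - chx 'chi_i z) * (1 - chx 'chi_j z))
  = gauss3 s t - gauss3 (s * z) t - gauss3 s (t * z) + gauss3 (s * z) (t * z).
Proof.
rewrite /gauss3 -!sumrB -big_split; apply: eq_bigr => i _.
rewrite -!sumrB -big_split; apply: eq_bigr => j _.
have [iM _ _ _] := mulchar_irr i; have [jM _ _ _] := mulchar_irr j.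
by rewrite !iM !jM /=; ring.
Qed.

End GaussCharacters.

Section Appell.
Context {F : finFieldType}.
Variable psi : F -> algC.
Hypotheses (psiD : {morph psi : x y / x + y >-> x * y}) (psi0 : psi 0 = 1)
  (psi_nontriv : exists x, psi x != 1).

Local Notation q := (qF F).
Local Notation G := (gsum psi).

Lemma appellF2_eps (b1 b2 : 'CF(UG F)) (x y : F) :
  b1 \is a linear_char -> b2 \is a linear_char ->
  appellF2 psi 1 b1 b2 1 1 x y = (1 - q)^-2 *
    \sum_(i : Iirr (UG F)) \sum_(j : Iirr (UG F))
      G (fun z => chx 'chi_i z * chx 'chi_j z) * G (fun z => (chx 'chi_i z)^*) *
      G (fun z => (chx 'chi_j z)^*) * chx 'chi_i (- x) * chx 'chi_j (- y) *
      ((\sum_z (1 - chx 'chi_i z) * chx b1 (mob z)) *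
       (\sum_z (1 - chx 'chi_j z) * chx b2 (mob z))).
Proof.
move=> b1_lin b2_lin; rewrite /appellF2; congr (_ * _).
apply: eq_bigr => i _; apply: eq_bigr => j _.
have [iM _ _ _] := mulchar_irr i; have [jM _ _ _] := mulchar_irr j.
rewrite -!(poch_div_pochc1 _ psiD psi0 psi_nontriv) ?irr_UG_lin //.
have -> : poch psi 1 ('chi_i * 'chi_j) = G (fun z => chx 'chi_i z * chx 'chi_j z).
  rewrite /poch mul1r !gaussE (eq_gsum _ _ _ chx1) (gsum_mchar1 _ psiD psi0 psi_nontriv) divr1.
  by apply: eq_gsum => z; rewrite chxM.
have Pi := pochc1_inv _ psiD psi0 psi_nontriv _ (irr_UG_lin i).
have Pj := pochc1_inv _ psiD psi0 psi_nontriv _ (irr_UG_lin j).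
move: (pochc psi 1 'chi_i) (pochc psi 1 'chi_j) Pi Pj => pi pj Pi Pj.
by rewrite !invfM Pi Pj -[- x]mulN1r -[- y]mulN1r iM jM; ring.
Qed.

Lemma sum_appellF2_conj_twist (nu : Iirr (UG F)) x y :
  \sum_(eta : Iirr (UG F))
     appellF2 psi 1 ('chi_eta)^*%CF (('chi_nu)^*%CF * 'chi_eta) 1 1 x y =
  (1 - q)^-2 * \sum_z (q - 1) * (chx 'chi_nu (mob z))^* *
    (gauss3 psi (- x) (- y) - gauss3 psi (- x * z) (- y) - gauss3 psi (- x) (- y * z)
     + gauss3 psi (- x * z) (- y * z)).
Proof.
have lin_conj (i : Iirr (UG F)) : ('chi_i)^*%CF \is a linear_char.
  by rewrite cfConjC_lin_char irr_UG_lin.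
under eq_bigr do rewrite appellF2_eps ?mul_lin_char ?lin_conj ?irr_UG_lin //.
rewrite -mulr_sumr; congr (_ * _).
rewrite exchange_big; under eq_bigr do rewrite exchange_big.
under eq_bigr => i _ do under eq_bigr => j _ do
  rewrite -mulr_sumr sum_irr_conj_twist mulr_sumr mulr_sumr.
under eq_bigr do rewrite exchange_big.
rewrite exchange_big; apply: eq_bigr => z _.
rewrite -gauss3_expand mulr_sumr; apply: eq_bigr => i _.
by rewrite mulr_sumr; apply: eq_bigr => j _; ring.
Qed.

Lemma gauss3_half_expand h z : h + h = 1 -> z != 1 ->
  gauss3 psi (- h) (- h) - gauss3 psi (- h * z) (- h) - gauss3 psi (- h) (- h * z)
    + gauss3 psi (- h * z) (- h * z)
  = (q - 1) ^+ 2 * (1 - q) - (q - 1) ^+ 2 * mchar1 z.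
Proof.
move=> hh z1; have h0 : h != 0.
  by apply/eqP => h0; move: hh; rewrite h0 addr0 => /eqP; rewrite eq_sym oner_eq0.
have z1' : 1 - z != 0 by rewrite subr_eq0 eq_sym.
rewrite !gauss3E //; have -> : 1 + - h + - h = 0 by rewrite -addrA -opprD hh subrr.
rewrite eqxx oppr_eq0 h0 /mchar1 /=.
have [->|z0] := eqVneq z 0; first by rewrite !mulr0 eqxx /=; ring.
have -> : 1 + - h * z + - h = h * (1 - z) by rewrite -[1 in LHS]hh; ring.
have -> : 1 + - h + - h * z = h * (1 - z) by rewrite -[1 in LHS]hh; ring.
have -> : 1 + - h * z + - h * z = 1 - z by rewrite -addrA -mulrDl -opprD hh mulN1r.
by rewrite !mulf_neq0 ?oppr_eq0 //= (negbTE z1') (negbTE (mulf_neq0 h0 z1')) mulr0n; ring.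
Qed.

Lemma sum_gauss3_half_expand (nu : Iirr (UG F)) h : 'chi_nu != 1 -> h + h = 1 ->
  \sum_z (q - 1) * (chx 'chi_nu (mob z))^* *
    (gauss3 psi (- h) (- h) - gauss3 psi (- h * z) (- h) - gauss3 psi (- h) (- h * z)
     + gauss3 psi (- h * z) (- h * z))
  = (q - 1) ^+ 3.
Proof.
move=> nu1 hh; have [_ nu_1 _ _] := mulchar_irr nu.
have sum_nu_mob : \sum_z (chx 'chi_nu (mob z))^* = 0.
  rewrite (sum_mob (fun y => (chx 'chi_nu y)^*)) -rmorph_sum.
  by rewrite sum_chx_lin_nontriv ?irr_UG_lin // rmorph0.
transitivity (\sum_z ((q - 1) ^+ 3 * (- q) * (chx 'chi_nu (mob z))^* +
                      (q - 1) ^+ 3 * ((chx 'chi_nu (mob z))^* * (z == 0)%:R))).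
  apply: eq_bigr => z _; have [->|z1] := eqVneq z 1.
    by rewrite mob1 chx0 conjC0 !(mulr0, mul0r) addr0.
  by rewrite gauss3_half_expand // mchar1E; ring.
by rewrite big_split /= -!mulr_sumr sum_nu_mob sum_delta mob0 nu_1 conjC1 mulr0 add0r mulr1.
Qed.

End Appell.

Theorem corollary3p8 (F : finFieldType) (psi : F -> algC) (nu : Iirr (UG F)) :
  (2%N \notin [pchar F]) ->
  additive_char psi ->
  'chi_nu != 1 ->
  (1 - qF F)^-1 * \sum_(eta : Iirr (UG F))
     appellF2 psi 1 ('chi_eta)^*%CF (('chi_nu)^*%CF * 'chi_eta) 1 1
       (2%:R)^-1 (2%:R)^-1 = -1.
Proof.
move=> char2 [psiD [psi0 psi_nontriv]] nu1.
have two0 : (2%:R : F) != 0 by apply: contra char2 => two0; rewrite inE /= two0.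
have half : (2%:R : F)^-1 + (2%:R)^-1 = 1.
  by apply: (mulfI two0); rewrite mulrDr mulfV // mulr1.
rewrite sum_appellF2_conj_twist // sum_gauss3_half_expand //.
have := @card_sub1_neq0 F algC; rewrite -/(qF F) => n0.
by rewrite -opprB; field.
Qed.
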